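(* Let $a$ be a nonzero integer, let $(L_n)_{n\ge0}$ be the Lucas sequence $L(a,1)$, let $p\ge3$ be a prime with $\alpha_L(p)>2$, let $D=a^2+4$, and let $\lambda_1=\frac{a+\sqrt D}{2}$, $\lambda_2=\frac{a-\sqrt D}{2}$. Suppose that $p^2\mid D$, or that $(\lambda_2/\lambda_1)^l-1$ is not divisible by $\pi^2$, where $l$ is the order of $\lambda_2/\lambda_1$ modulo $\pi$. Then $$\overline{\left\{\frac{L_{n+\alpha_L(p)}}{L_n}\right\}_{n}}\ \cup\ \overline{\left\{\frac{L_{n+\alpha_L(p)-2}}{L_n}\right\}_{n}}=\mathbf{Q}_p.$$ In particular, if $(F_n)$ is the Fibonacci sequence and $p\ge3$ is not a Wall–Sun–Sun prime, then $$\overline{\left\{\frac{F_{n+\alpha_F(p)}}{F_n}\right\}_{n}}\ \cup\ \overline{\left\{\frac{F_{n+\alpha_F(p)-2}}{F_n}\right\}_{n}}=\mathbf{Q}_p.$$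
   Context: The Lucas sequence $L(a,b)$ is defined by $L_0=0$, $L_1=1$, $L_n=aL_{n-1}+bL_{n-2}$ ($n\ge2$); the Fibonacci sequence is $L(1,1)$. The sets in the claim range over $n\ge0$ with $L_n\ne0$ (resp. $F_n\neq 0$), and the bars denote closure in $\mathbf{Q}_p$. The rank of appearance $\alpha_L(p)$ is the least $n\ge1$ with $p\mid L_n$. A prime $p$ is a Wall–Sun–Sun prime if $p^2\mid F_{\alpha_F(p)}$. Here $\pi$ is a uniformizer of $\mathbf{Q}_p(\sqrt D)$ (with $\pi=p$ when $\mathbf{Q}_p(\sqrt D)=\mathbf{Q}_p$ or is unramified over $\mathbf{Q}_p$; $|\pi|_p=p^{-1/2}$ when ramified); divisibility and congruences are in the ring of integers of $\mathbf{Q}_p(\sqrt D)$, and the order of a unit $u$ modulo $\pi$ is the least $l\ge1$ with $u^l\equiv 1\pmod\pi$. *)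

From mathcomp Require Import all_boot all_order all_algebra.
Set Implicit Arguments. Unset Strict Implicit. Unset Printing Implicit Defensive.
Import Order.TTheory GRing.Theory Num.Theory.
Local Open Scope ring_scope.

Fixpoint lucas_pair (a b : int) (n : nat) : int * int :=
  match n with
  | 0%N => (0, 1)
  | n'.+1 => let xy := lucas_pair a b n' in (xy.2, a * xy.2 + b * xy.1)
  end.
Definition lucas (a b : int) (n : nat) : int := (lucas_pair a b n).1.
Definition fib (n : nat) : int := lucas 1 1 n.

Definition rank_of_appearance (L : nat -> int) (p al : nat) : Prop :=
  (0 < al)%N /\ (p%:Z %| L al)%Z /\
  forall m : nat, (0 < m < al)%N -> ~ (p%:Z %| L m)%Z.

Definition vp (p : nat) (q : rat) : int :=
  (logn p (absz (numq q)))%:Z - (logn p (absz (denq q)))%:Z.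

Definition padic_small (p k : nat) (q : rat) : Prop :=
  q = 0 \/ k%:Z <= vp p q.

(* Since Q is dense in Q_p and the
   closure of a union is the union of closures, this says: every p-adic ball
   centred at a rational meets one of the two sets. *)
Definition closures_union_is_Qp (L : nat -> int) (p s t : nat) : Prop :=
  forall (x : rat) (k : nat), exists n : nat,
    L n != 0 /\
    (padic_small p k ((L (n + s)%N)%:~R / (L n)%:~R - x) \/
     padic_small p k ((L (n + t)%N)%:~R / (L n)%:~R - x)).

(* ---------- the quadratic field Q(sqrt D): x + y sqrt D represented as (x, y) ---------- *)
Definition qmul (D : int) (z w : rat * rat) : rat * rat :=
  (z.1 * w.1 + D%:~R * z.2 * w.2, z.1 * w.2 + z.2 * w.1).
Definition qnorm (D : int) (z : rat * rat) : rat := z.1 ^+ 2 - D%:~R * z.2 ^+ 2.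
Definition qinv (D : int) (z : rat * rat) : rat * rat :=
  (z.1 / qnorm D z, - z.2 / qnorm D z).
Fixpoint qpow (D : int) (z : rat * rat) (n : nat) : rat * rat :=
  match n with 0%N => (1, 0) | n'.+1 => qmul D z (qpow D z n') end.
Definition qsub1 (z : rat * rat) : rat * rat := (z.1 - 1, z.2).

Definition lambda1 (a : int) : rat * rat := (a%:~R / 2, 1 / 2).
Definition lambda2 (a : int) : rat * rat := (a%:~R / 2, - (1 / 2)).

Definition pi_pow_divides (p : nat) (D : int) (k : nat) (z : rat * rat) : Prop :=
  let e := if (p%:Z %| D)%Z then 1%N else 2%N in
  qnorm D z = 0 \/ (k * e)%N%:Z <= vp p (qnorm D z).

Definition order_mod_pi (p : nat) (D : int) (u : rat * rat) (l : nat) : Prop :=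
  (0 < l)%N /\ pi_pow_divides p D 1 (qsub1 (qpow D u l)) /\
  forall m : nat, (0 < m < l)%N -> ~ pi_pow_divides p D 1 (qsub1 (qpow D u m)).

From mathcomp Require Import all_boot all_order all_algebra.
From mathcomp Require Import ring zify.

(* Let r be the rank of appearance of p, c = L_(r-1) and t = L_r, so that
   L_(k+r) = c L_k + t L_(k+1), p | t and, by Cassini's identity, p does not
   divide c.  Assume p^2 does not divide t.  Since L_(nr) = n c^(n-1) t modulo
   p^(j+2) whenever p^j | n, replacing m by m + p^j s changes
   Y2 L_(mr) - Y1 L_(mr+1) modulo p^(j+2) by p^(j+1) s times a unit; lifting
   one p-adic digit at a time shows that the ratios L_(mr)/L_(mr+1), m >= 1,
   are dense in p Z_p.  Hence L_(mr+r)/L_(mr) = c + t L_(mr+1)/L_(mr) comes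
   arbitrarily close to every x with v_p(x - c) <= 0, and
   L_(mr+r-1)/L_(mr+1) = c + L_(r-2) L_(mr)/L_(mr+1) to every x with
   v_p(x - c) >= 1, because L_(r-2) is a p-adic unit.

   It remains to check that p^2 does not divide L_r.  If p | D, the binomial
   expansion of 2^(n-1) L_n in powers of D gives r = p and
   2^(p-1) L_p = p a^(p-1) modulo p^2.  Otherwise the norm identity
   N(u^m - 1) = -(-1)^m D L_m^2 shows that r is the order of u modulo pi and
   that pi^2 | u^r - 1 exactly when p^2 | L_r.  For the Fibonacci numbers it
   is the hypothesis that p is not a Wall-Sun-Sun prime. *)

Set Implicit Arguments.
Unset Strict Implicit.
Unset Printing Implicit Defensive.

Import Order.TTheory GRing.Theory Num.Theory.
Local Open Scope ring_scope.

Lemma natz_exp (p k : nat) : (p ^ k)%N%:Z = p%:Z ^+ k.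
Proof. by rewrite -natz natrX natz. Qed.

Section PrimeDivisibility.

Variable p : nat.
Hypothesis pp : prime p.

Lemma prime_dvdzM (x y : int) :
  (p%:Z %| x * y)%Z = (p%:Z %| x)%Z || (p%:Z %| y)%Z.
Proof. by rewrite !unfold_in /= abszM Euclid_dvdM. Qed.

Lemma prime_dvdzX (x : int) k : (p%:Z %| x ^+ k)%Z -> (p%:Z %| x)%Z.
Proof. by rewrite !unfold_in /= abszX Euclid_dvdX // => /andP[]. Qed.

Lemma dvdz_pexp_logn (z : int) e : z != 0 ->
  (p%:Z ^+ e %| z)%Z = (e <= logn p `|z|)%N.
Proof. by move=> z0; rewrite -natz_exp unfold_in /= pfactor_dvdn ?absz_gt0. Qed.

Lemma logn_ndvdz (z : int) : ~~ (p%:Z %| z)%Z -> logn p `|z| = 0%N.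
Proof. by move=> pz; apply: logn_coprime; rewrite prime_coprime. Qed.

Lemma pfactorz (z : int) : z != 0 ->
  exists2 z' : int, ~~ (p%:Z %| z')%Z & z = z' * p%:Z ^+ logn p `|z|.
Proof.
move=> z0; have [|m p_m Em] := pfactor_coprime pp (_ : (0 < `|z|)%N).
  by rewrite absz_gt0.
exists ((-1) ^+ (z < 0)%R * m%:Z); first by rewrite unfold_in /= abszMsign -prime_coprime.
by rewrite -mulrA -natz_exp -PoszM -Em mulz_sign_abs.
Qed.

Lemma dvdz_lin_solvable (u w : int) : ~~ (p%:Z %| w)%Z ->
  exists s : nat, (p%:Z %| u + s.+1%:R * w)%Z.
Proof.
move=> pw; have [x [y]] := Bezoutz w p.
have -> : gcdz w p = 1.
  by apply/eqP; rewrite /gcdz gcdnC -[_ == _]/(coprime _ _) prime_coprime.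
move=> bez; have p0 : p%:Z != 0 by rewrite eqz_nat -lt0n prime_gt0.
set s0 := - u * x; exists (`|(s0 %% p)%Z| + p.-1)%N.
have -> : (`|(s0 %% p)%Z| + p.-1)%N.+1%:R = (s0 %% p)%Z + p%:Z :> int.
  by rewrite -addnS prednK ?prime_gt0 // natrD !natz gez0_abs ?modz_ge0.
have -> : (s0 %% p)%Z = s0 - (s0 %/ p)%Z * p by rewrite {2}(divz_eq s0 p) addrAC subrr add0r.
have -> : u + (s0 - (s0 %/ p)%Z * p + p%:Z) * w
    = (u * y + (1 - (s0 %/ p)%Z) * w) * p%:Z + u * (1 - (x * w + y * p%:Z)).
  by rewrite /s0; ring.
by rewrite bez subrr mulr0 addr0 dvdz_mull.
Qed.

End PrimeDivisibility.

Lemma ltn_pexp_pred p i : (3 <= p)%N -> (2 <= i)%N -> (i < p ^ i.-1)%N.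
Proof.
move=> p3; case: i => [|[|k]] // _ /=.
have := ltn_expl k (isT : (1 < 3)%N).
have : (3 ^ k.+1 <= p ^ k.+1)%N by rewrite leq_exp2r.
rewrite expnS; lia.
Qed.

(* From i * 'C(N, i) = N * 'C(N.-1, i.-1) and logn p i <= i - 2. *)
Lemma dvdn_bin_pexp p j N i : prime p -> (3 <= p)%N -> (p ^ j %| N)%N -> (2 <= i)%N ->
  (p ^ j.+2 %| 'C(N, i) * p ^ i)%N.
Proof.
move=> pp p3 pjN i2.
have [Ni|iN] := ltnP N i; first by rewrite bin_small.
have i0 : (0 < i)%N by apply: leq_trans i2.
have pj_iC : (p ^ j %| i * 'C(N, i))%N.
  by case: i i0 iN {i2} => // i _ _; rewrite -mul_bin_diag dvdn_mulr.
have [i' p_i' Ei] := pfactor_coprime pp i0; set v := logn p i in Ei.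
have pj_C : (p ^ j %| p ^ v * 'C(N, i))%N.
  by move: pj_iC; rewrite Ei -mulnA Gauss_dvdr // coprimeXl.
have v2 : (v.+2 <= i)%N.
  have : (p ^ v < p ^ i.-1)%N.
    apply: (@leq_ltn_trans i); last exact: ltn_pexp_pred.
    by apply: dvdn_leq => //; rewrite pfactor_dvdnn.
  by rewrite ltn_exp2l ?prime_gt1 //; lia.
rewrite -[in (p ^ i)%N](subnK v2) expnD mulnCA dvdn_mull // -(addn2 j) -(addn2 v) !expnD.
by rewrite mulnA [(_ * p ^ v)%N]mulnC dvdn_mul.
Qed.

Section LucasSequence.

Variable a : int.
Local Notation L := (lucas a 1).

Lemma lucas0 : L 0 = 0. Proof. by []. Qed.
Lemma lucas1 : L 1 = 1. Proof. by []. Qed.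

Lemma lucasSS n : L n.+2 = a * L n.+1 + L n.
Proof. by rewrite /lucas /= mul1r. Qed.

Lemma lucas_add m n : L (m + n.+1) = L m * L n + L m.+1 * L n.+1.
Proof.
suff IH k : L (m + k.+1) = L m * L k + L m.+1 * L k.+1
         /\ L (m + k.+2) = L m * L k.+1 + L m.+1 * L k.+2 by case: (IH n).
elim: k => [|k [IH1 IH2]].
  by rewrite addn1 addn2 lucasSS (lucasSS 0) lucas0 lucas1; split; ring.
split=> //; rewrite !addnS lucasSS -!addnS IH1 IH2.
rewrite (lucasSS k.+1) (lucasSS k); ring.
Qed.

Lemma lucas_cassini n : L n.+1 ^+ 2 - a * L n * L n.+1 - L n ^+ 2 = (-1) ^+ n.
Proof.
elim: n => [|n IH]; first by rewrite lucas0 lucas1; ring.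
by rewrite lucasSS [(-1) ^+ n.+1]exprS -IH; ring.
Qed.

Lemma lucas_addr k r : (0 < r)%N -> L (k + r) = L r.-1 * L k + L r * L k.+1.
Proof. by case: r => // r _; rewrite lucas_add; ring. Qed.

Lemma lucas_expand r n k : (0 < r)%N ->
  L (n * r + k) = \sum_(i < n.+1)
     'C(n, i)%:R * L r.-1 ^+ (n - i) * L r ^+ i * L (i + k).
Proof.
move=> r0; set c := L r.-1; set t := L r.
elim: n k => [|n IH] k.
  by rewrite mul0n add0n big_ord_recl big_ord0 /= addr0 bin0 expr0 !mul1r.
have -> : (n.+1 * r + k = n * r + (k + r))%N by rewrite mulSn; lia.
rewrite IH; under eq_bigr => i _ do rewrite addnA lucas_addr // -/c -/t mulrDr.
rewrite big_split /= big_ord_recl /= [in RHS]big_ord_recl /=.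
rewrite bin0 !subn0 !expr0 !mulr1 !mul1r.
under [in RHS]eq_bigr => i _ do rewrite binS natrD !mulrDl.
rewrite big_split /= addrA -!addrA; congr (_ + _); first by rewrite exprS; ring.
congr (_ + _); last first.
  by apply: eq_bigr => i _; rewrite /bump /= add1n subSS exprS addSn; ring.
rewrite [in RHS]big_ord_recr /= bin_small // !mul0r addr0.
apply: eq_bigr => i _; rewrite /bump /= add1n subSS.
by rewrite -(subnSK (ltn_ord i)) [c ^+ _.+1]exprS; ring.
Qed.

Lemma lucas_mul_add_mod (d : int) r n k : (0 < r)%N -> (d %| L r)%Z ->
  (d %| L (n * r + k) - L r.-1 ^+ n * L k)%Z.
Proof.
move=> r0 dt; rewrite lucas_expand // big_ord_recl /= bin0 subn0 expr0 mulr1 mul1r.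
rewrite add0n addrC addKr; apply: rpred_sum => i _.
by rewrite /bump /= exprS; apply/dvdz_mulr/dvdz_mull/dvdz_mulr.
Qed.

Lemma lucas_mul_mod_pexp (p j r n : nat) : prime p -> (3 <= p)%N -> (0 < r)%N ->
  (p%:Z %| L r)%Z -> (p ^ j %| n)%N ->
  (p%:Z ^+ j.+2 %| L (n * r) - n%:R * L r.-1 ^+ n.-1 * L r)%Z.
Proof.
move=> pp p3 r0 pt pj_n; case: n pj_n => [|n] pj_n.
  by rewrite mul0n lucas0 mul0r subr0 dvdz0.
rewrite -[(n.+1 * r)%N]addn0 lucas_expand // !big_ord_recl /= lucas0 mulr0 add0r.
rewrite /bump /= bin1 subn1 expr1 lucas1 mulr1 addrC addKr; apply: rpred_sum => i _.
rewrite !add1n addn0; apply/dvdz_mulr; rewrite mulrAC; apply/dvdz_mulr.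
apply: (@dvdz_trans ('C(n.+1, i.+2) * p ^ i.+2)%N%:Z).
  by rewrite -natz_exp; apply: dvdn_bin_pexp.
by rewrite PoszM natz_exp natz dvdz_mul // dvdz_exp2r.
Qed.

Lemma lucas_addE x y : L (x + y) = L x * (L y.+1 - a * L y) + L x.+1 * L y.
Proof.
by case: y => [|y]; rewrite ?addn0 ?lucas0 ?lucas1 ?lucas_add ?lucasSS; ring.
Qed.

Lemma lucas_pred_ndvd (p r : nat) : prime p -> (0 < r)%N ->
  (p%:Z %| L r)%Z -> ~~ (p%:Z %| L r.-1)%Z.
Proof.
move=> pp r0 pt; apply/negP => pc.
have := lucas_cassini r.-1; rewrite prednK // => cassini.
suff : (p%:Z %| (-1) ^+ r.-1)%Z by move/(prime_dvdzX pp); rewrite unfold_in /= Euclid_dvd1.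
by rewrite -cassini !rpredB ?dvdz_mull // expr2 dvdz_mull.
Qed.

Lemma lucas_mul_succ_ndvd (p r m : nat) : prime p -> (0 < r)%N ->
  (p%:Z %| L r)%Z -> ~~ (p%:Z %| L (m * r).+1)%Z.
Proof.
move=> pp r0 pt; apply: contra (lucas_pred_ndvd pp r0 pt) => pB.
have := lucas_mul_add_mod m 1 r0 pt; rewrite addn1 lucas1 mulr1.
by rewrite (rpredBl _ pB) => /(prime_dvdzX pp).
Qed.

End LucasSequence.

Section RankMultiples.

Variables (a : int) (p r : nat).
Hypotheses (pp : prime p) (p_ge3 : (3 <= p)%N) (r_gt0 : (0 < r)%N).
Hypotheses (p_t : (p%:Z %| lucas a 1 r)%Z) (p2_t : ~~ (p%:Z ^+ 2 %| lucas a 1 r)%Z).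

Local Notation L := (lucas a 1).
Local Notation c := (L r.-1).

Variables Y1 Y2 : int.
Hypotheses (p_Y1 : (p%:Z %| Y1)%Z) (p_Y2 : ~~ (p%:Z %| Y2)%Z).

Let defect m := Y2 * L (m * r) - Y1 * L (m * r).+1.

Lemma defect_add m n : defect (m + n) =
  (L (n * r).+1 - a * L (n * r)) * defect m
  + L (n * r) * (Y2 * L (m * r).+1 - Y1 * (L (m * r) + a * L (m * r).+1)).
Proof. by rewrite /defect mulnDl lucas_addE -addnS lucas_add; ring. Qed.

Lemma defect_lift j m : (p%:Z ^+ j.+1 %| defect m)%Z ->
  exists s : nat, (p%:Z ^+ j.+2 %| defect (m + p ^ j * s.+1))%Z.
Proof.
move=> /dvdzP[e defect_m]; have [tau t_eq] := dvdzP p_t; have [y1 Y1_eq] := dvdzP p_Y1.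
have p_tau : ~~ (p%:Z %| tau)%Z.
  by apply: contra p2_t => /dvdzP[k tau_eq]; rewrite t_eq tau_eq -mulrA -expr2 dvdz_mull.
have p_w : ~~ (p%:Z %| tau * Y2 * L (m * r).+1)%Z.
  by rewrite !prime_dvdzM // !negb_or p_tau p_Y2 lucas_mul_succ_ndvd.
have [s /dvdzP[z sol]] := dvdz_lin_solvable pp (c * e) p_w.
exists s; set n := (p ^ j * s.+1)%N.
have n_gt0 : (0 < n)%N by rewrite muln_gt0 expn_gt0 prime_gt0.
have /dvdzP[delta An] := lucas_mul_mod_pexp pp p_ge3 r_gt0 p_t (dvdn_mulr s.+1 (dvdnn (p ^ j))).
have /dvdzP[gamma Bn] := lucas_mul_add_mod n 1 r_gt0 p_t.
have cn : c ^+ n = c * c ^+ n.-1 by rewrite -exprS prednK.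
rewrite addn1 lucas1 mulr1 cn in Bn.
rewrite defect_add defect_m; move: Bn An; rewrite -/n.
move: (L (n * r)) (L (n * r).+1) => An Bn /(canRL (subrK _)) -> /(canRL (subrK _)) ->.
set B := L (m * r).+1; set A := L (m * r).
rewrite /n natrM natrX natz t_eq Y1_eq; set C := c ^+ _.-1.
(* Now L (n * r) = p^(j+1) sigma mod p^(j+2) and L (n * r).+1 = c^n mod p,
   so defect (m + n) = p^(j+1) C (c e + s.+1 tau Y2 B) mod p^(j+2), and s
   was chosen to make the last factor divisible by p. *)
set sigma := s.+1%:R * C * tau; set Q := A + a * B.
set R := gamma * e - a * e * p%:Z ^+ j * (sigma + delta * p%:Z)
         + delta * (Y2 * B - y1 * p%:Z * Q) - sigma * y1 * Q.
apply/dvdzP; exists (C * z + R); apply/eqP; rewrite -subr_eq0; apply/eqP.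
transitivity (p%:Z ^+ j.+1 * C * (c * e + s.+1%:R * (tau * Y2 * B) - z * p%:Z)).
  by rewrite /R /sigma /Q !exprS; ring.
by rewrite sol subrr mulr0.
Qed.

Lemma lucas_mul_ratio_approx K :
  exists2 m, (0 < m)%N & (p%:Z ^+ K %| Y2 * L (m * r) - Y1 * L (m * r).+1)%Z.
Proof.
elim: K => [|[|j] [m m_gt0 pK]]; first by exists 1%N; rewrite ?dvd1z.
  by exists 1%N => //; rewrite expr1 mul1n rpredB ?(dvdz_mull _ p_t) ?(dvdz_mulr _ p_Y1).
have [s ps] := defect_lift pK; exists (m + p ^ j * s.+1)%N => //.
by rewrite addn_gt0 m_gt0.
Qed.

End RankMultiples.

Lemma vp_frac (p : nat) (N D : int) : N != 0 -> D != 0 ->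
  vp p (N%:~R / D%:~R) = (logn p `|N|)%:Z - (logn p `|D|)%:Z.
Proof.
move=> N0 D0; set q : rat := N%:~R / D%:~R.
have q_eq : numq q * D = N * denq q.
  apply: (@intr_inj rat); rewrite !intrM numqE /q.
  by field; rewrite intr_eq0.
have nq0 : numq q != 0 by rewrite numq_eq0 /q mulf_neq0 ?invr_eq0 ?intr_eq0.
have := congr1 (logn p \o absz) q_eq; rewrite /= !abszM !lognM ?absz_gt0 ?denq_neq0 //.
by rewrite /vp; lia.
Qed.

Lemma padic_small_frac (p k : nat) (N D : int) : prime p -> D != 0 ->
  (p%:Z ^+ (k + logn p `|D|) %| N)%Z -> padic_small p k (N%:~R / D%:~R).
Proof.
move=> pp D0; have [-> _|N0] := eqVneq N 0; first by left; rewrite mul0r.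
by rewrite dvdz_pexp_logn // => le_kN; right; rewrite vp_frac //; lia.
Qed.

Lemma sub_ratio_frac (x : rat) (u v : int) : v != 0 ->
  u%:~R / v%:~R - x = (denq x * u - numq x * v)%:~R / (denq x * v)%:~R.
Proof.
move=> v0; have : (denq x)%:~R != 0 :> rat by rewrite intr_eq0 denq_neq0.
rewrite intrB !intrM numqE; move: (denq x)%:~R => dx dx0.
by field; rewrite dx0 intr_eq0 v0.
Qed.

Section Approximation.

Variables (a : int) (p r : nat).
Hypotheses (pp : prime p) (p_ge3 : (3 <= p)%N) (r_gt2 : (2 < r)%N).
Hypotheses (p_t : (p%:Z %| lucas a 1 r)%Z) (p2_t : ~~ (p%:Z ^+ 2 %| lucas a 1 r)%Z).
Hypothesis p_ndvd_r2 : ~~ (p%:Z %| lucas a 1 (r - 2))%Z.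

Local Notation L := (lucas a 1).
Local Notation c := (L r.-1).

Variables (x : rat) (k : nat).

Let d := denq x.
Let f := logn p `|d|.
Let z := numq x - c * d.

Let r_gt0 : (0 < r)%N. Proof. exact: ltnW (ltnW r_gt2). Qed.
Let d_neq0 : d != 0. Proof. exact: denq_neq0. Qed.
Let numq_eq : numq x = z + c * d. Proof. by rewrite /z subrK. Qed.

Lemma approx_by_pred_shift : (p%:Z ^+ f.+1 %| z)%Z ->
  exists n, L n != 0 /\ padic_small p k ((L (n + (r - 2)))%:~R / (L n)%:~R - x).
Proof.
move=> /dvdzP[W z_eq]; have [Y p_Y d_eq] := pfactorz pp d_neq0.
have p_Y2 : ~~ (p%:Z %| Y * L (r - 2))%Z by rewrite prime_dvdzM // negb_or p_Y.
have [m _ /dvdzP[e defect_eq]] := lucas_mul_ratio_approx pp p_ge3 r_gt0 p_t p2_t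
  (dvdz_mull W (dvdzz p%:Z)) p_Y2 k.
have p_B := lucas_mul_succ_ndvd m pp r_gt0 p_t.
have B_neq0 : L (m * r).+1 != 0 by apply: contraNneq p_B => ->.
exists (m * r).+1; split => //.
rewrite sub_ratio_frac //; apply: padic_small_frac; rewrite ?mulf_neq0 //.
rewrite abszM lognM ?absz_gt0 // (logn_ndvdz pp p_B) addn0 -/f.
have -> : d * L ((m * r).+1 + (r - 2)) - numq x * L (m * r).+1 = e * p%:Z ^+ k * p%:Z ^+ f.
  rewrite addSnnS lucas_add (_ : (r - 2).+1 = r.-1); last by lia.
  by rewrite -defect_eq numq_eq z_eq d_eq /f -/d exprS; ring.
by rewrite -mulrA -exprD dvdz_mull.
Qed.

Lemma approx_by_rank_shift : ~~ (p%:Z ^+ f.+1 %| z)%Z ->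
  exists n, L n != 0 /\ padic_small p k ((L (n + r))%:~R / (L n)%:~R - x).
Proof.
move=> p_z; have z_neq0 : z != 0 by apply: contraNneq p_z => ->; apply: dvdz0.
have [Y p_Y d_eq] := pfactorz pp d_neq0.
have [Z p_Z z_eq] := pfactorz pp z_neq0; set f1 := logn p `|z| in z_eq.
have f1_le : (f1 <= f)%N by rewrite leqNgt -dvdz_pexp_logn.
have pf : p%:Z ^+ f = p%:Z ^+ f1 * p%:Z ^+ (f - f1) by rewrite -exprD subnKC.
have [tau t_eq] := dvdzP p_t.
have p_tau : ~~ (p%:Z %| tau)%Z.
  by apply: contra p2_t => /dvdzP[l tau_eq]; rewrite t_eq tau_eq -mulrA -expr2 dvdz_mull.
set Y1 := L r * Y * p%:Z ^+ (f - f1); set K := (k + f.*2 + 2)%N.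
have p_Y1 : (p%:Z %| Y1)%Z by rewrite /Y1 -mulrA dvdz_mulr.
have [m _ /dvdzP[e defect_eq]] := lucas_mul_ratio_approx pp p_ge3 r_gt0 p_t p2_t p_Y1 p_Z K.
set A := L (m * r) in defect_eq *; set B := L (m * r).+1 in defect_eq.
(* [Y1 * B] has valuation exactly [f - f1 + 1], and [Z * A] agrees with it modulo [p ^ K]. *)
have p_A : ~~ (p%:Z ^+ (f - f1).+2 %| A)%Z.
  apply/negP => pA; have : (p%:Z ^+ (f - f1).+2 %| Y1 * B)%Z.
    have -> : Y1 * B = Z * A - e * p%:Z ^+ K by rewrite -defect_eq; ring.
    by rewrite rpredB ?(dvdz_mull _ pA) // dvdz_mull // dvdz_exp2l // /K; clear; lia.
  have -> : Y1 * B = tau * Y * B * p%:Z ^+ (f - f1).+1 by rewrite /Y1 t_eq exprS; ring.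
  rewrite [p%:Z ^+ (f - f1).+2]exprS dvdz_mul2r ?expf_neq0 ?eqz_nat -?lt0n ?prime_gt0 //.
  by rewrite !prime_dvdzM // (negbTE p_Y) (negbTE p_tau) (negbTE (lucas_mul_succ_ndvd _ pp r_gt0 p_t)).
have A_neq0 : A != 0 by apply: contraNneq p_A => ->.
have logA : (logn p `|A| <= (f - f1).+1)%N by rewrite leqNgt -dvdz_pexp_logn.
exists (m * r); split => //.
rewrite sub_ratio_frac //; apply: padic_small_frac; rewrite ?mulf_neq0 //.
have -> : d * L (m * r + r) - numq x * A = - (e * p%:Z ^+ K * p%:Z ^+ f1).
  by rewrite lucas_addr // numq_eq z_eq -defect_eq d_eq /f -/d pf /Y1; ring.
rewrite rpredN -mulrA -exprD dvdz_mull // dvdz_exp2l //.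
rewrite abszM lognM ?absz_gt0 // -/f -/A /K; move: f1_le logA; clear; lia.
Qed.

End Approximation.

Lemma lucas_closures_union (a : int) (p r : nat) : prime p -> (3 <= p)%N ->
  rank_of_appearance (lucas a 1) p r -> (2 < r)%N ->
  ~~ (p%:Z ^+ 2 %| lucas a 1 r)%Z ->
  closures_union_is_Qp (lucas a 1) p r (r - 2).
Proof.
move=> pp p_ge3 [_ [p_t r_min]] r_gt2 p2_t x k.
have p_r2 : ~~ (p%:Z %| lucas a 1 (r - 2))%Z by apply/negP; apply: r_min; lia.
case: (boolP (p%:Z ^+ (logn p `|denq x|).+1 %| numq x - lucas a 1 r.-1 * denq x)%Z).
  move=> /(approx_by_pred_shift pp p_ge3 r_gt2 p_t p2_t p_r2 k) [n [Ln small]].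
  by exists n; split => //; right.
move=> /(approx_by_rank_shift pp p_ge3 r_gt2 p_t p2_t k) [n [Ln small]].
by exists n; split => //; left.
Qed.

Section QuadraticRatio.

Variable a : int.
Local Notation L := (lucas a 1).
Local Notation D := (a ^+ 2 + 4).
Local Notation u := (qmul D (lambda2 a) (qinv D (lambda1 a))).

Lemma lambda_ratioE : u = (- (a%:~R ^+ 2 + 2) / 2, a%:~R / 2).
Proof.
rewrite /qmul /qinv /qnorm /lambda1 /lambda2 /= intrD rmorphXn /=.
have -> : (a%:~R / 2) ^+ 2 - (a%:~R ^+ 2 + 4%:~R) * (1 / 2) ^+ 2 = -1 :> rat by field.
by congr (_, _); field.
Qed.

Lemma lucas_cassini_rat m :
  (L m.+1)%:~R ^+ 2 - a%:~R * (L m)%:~R * (L m.+1)%:~R - (L m)%:~R ^+ 2 = (-1) ^+ m :> rat.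
Proof.
have /(congr1 (fun z : int => z%:~R : rat)) := lucas_cassini a m.
by rewrite /= !rmorphB /= !rmorphM /= !rmorphXn /= rmorphN1.
Qed.

Lemma lambda_ratio_expE m : qpow D u m =
  (1 + (-1) ^+ m * (a%:~R ^+ 2 + 4) * (L m)%:~R ^+ 2 / 2,
   - ((-1) ^+ m * (L m)%:~R * ((L m.+1)%:~R - a%:~R * (L m)%:~R / 2))).
Proof.
elim: m => [|m IH]; first by rewrite /= lucas0 lucas1; congr (_, _); ring.
rewrite [qpow _ _ _.+1]/= IH lambda_ratioE /qmul /= intrD rmorphXn /=.
have := lucas_cassini_rat m; rewrite lucasSS (intrD _ (a * _)) (intrM _ a) [(-1) ^+ m.+1]exprS.
have : ((-1) ^+ m : rat) ^+ 2 = 1 by rewrite -exprM mulnC exprM sqrrN !expr1n.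
move: ((-1) ^+ m : rat) (a%:~R : rat) ((L m)%:~R : rat) ((L m.+1)%:~R : rat).
move=> s A Lm Lm1 s2 cassini; rewrite [4%:~R]/=.
congr (_, _); apply/eqP; rewrite -subr_eq0; apply/eqP.
  transitivity (s * (A ^+ 2 + 4) / 2 * ((Lm1 ^+ 2 - A * Lm * Lm1 - Lm ^+ 2) - s)
                + (A ^+ 2 + 4) / 2 * (s ^+ 2 - 1)); first by field.
  by rewrite cassini s2 !subrr !mulr0 addr0.
transitivity (- (s * A / 2) * ((Lm1 ^+ 2 - A * Lm * Lm1 - Lm ^+ 2) - s) - A / 2 * (s ^+ 2 - 1)).
  by field.
by rewrite cassini s2 !subrr !mulr0 subr0.
Qed.

Lemma qnorm_lambda_ratio_expB1 m :
  qnorm D (qsub1 (qpow D u m)) = (- ((-1) ^+ m * D * L m ^+ 2))%:~R.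
Proof.
rewrite lambda_ratio_expE /qsub1 /qnorm /= rmorphN /= !rmorphM /= !rmorphXn /= rmorphN1.
rewrite intrD rmorphXn /=.
have := lucas_cassini_rat m.
have : ((-1) ^+ m : rat) ^+ 2 = 1 by rewrite -exprM mulnC exprM sqrrN !expr1n.
move: ((-1) ^+ m : rat) (a%:~R : rat) ((L m)%:~R : rat) ((L m.+1)%:~R : rat).
move=> s A Lm Lm1 s2 cassini; rewrite [4%:~R]/=.
apply/eqP; rewrite -subr_eq0; apply/eqP.
transitivity (- (s ^+ 2 * (A ^+ 2 + 4) * Lm ^+ 2) * ((Lm1 ^+ 2 - A * Lm * Lm1 - Lm ^+ 2) - s)
              - s * (A ^+ 2 + 4) * Lm ^+ 2 * (s ^+ 2 - 1)); first by field.
by rewrite cassini s2 !subrr !mulr0 subr0.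
Qed.

Lemma vp_int (p : nat) (z : int) : vp p z%:~R = (logn p `|z|)%:Z.
Proof. by rewrite /vp numq_int denq_int logn1 subr0. Qed.

Lemma pi_pow_divides_lambda_ratio (p k m : nat) : prime p -> ~~ (p%:Z %| D)%Z ->
  pi_pow_divides p D k (qsub1 (qpow D u m)) <-> (p%:Z ^+ k %| L m)%Z.
Proof.
move=> pp p_D; rewrite /pi_pow_divides (negbTE p_D) qnorm_lambda_ratio_expB1 vp_int.
have [-> | Lm0] := eqVneq (L m) 0; first by rewrite dvdz0 expr0n mulr0 oppr0; split=> //; left.
have D0 : D != 0 by rewrite gt_eqF // ltr_wpDl // sqr_ge0.
have N0 : (- ((-1) ^+ m * D * L m ^+ 2))%:~R != 0 :> rat.
  by rewrite intr_eq0 oppr_eq0 !mulf_neq0 ?signr_eq0 ?expf_neq0.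
have -> : logn p `|- ((-1) ^+ m * D * L m ^+ 2)| = (2 * logn p `|L m|)%N.
  rewrite -mulrA abszN abszMsign abszM abszX lognM ?expn_gt0 ?absz_gt0 ?Lm0 //.
  by rewrite lognX (logn_ndvdz pp p_D).
rewrite dvdz_pexp_logn // lez_nat mulnC leq_mul2l /=.
by split=> [[/eqP|] | ]; [rewrite (negPf N0) | | right].
Qed.

Lemma order_mod_pi_lambda_ratio (p r : nat) : prime p -> ~~ (p%:Z %| D)%Z ->
  rank_of_appearance L p r -> order_mod_pi p D u r.
Proof.
move=> pp p_D [r_gt0 [p_t r_min]].
split=> //; split=> [|m /r_min p_m].
  by apply/(pi_pow_divides_lambda_ratio _ _ pp p_D); rewrite expr1.
by move/(pi_pow_divides_lambda_ratio _ _ pp p_D); rewrite expr1.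
Qed.

End QuadraticRatio.

Lemma bin3_rec n : 'C(n.+2, 3)%:R = 2 * 'C(n.+1, 3)%:R + n%:R - 'C(n, 3)%:R :> int.
Proof. by rewrite !binS bin1 !natrD; ring. Qed.

Section Ramified.

Variable a : int.
Local Notation L := (lucas a 1).
Local Notation D := (a ^+ 2 + 4).

(* 2^(n-1) L_n = \sum_k 'C(n, 2k+1) a^(n-2k-1) D^k, truncated modulo D^2 and scaled by 2 a^3. *)
Lemma lucas_mod_disc_sq n : exists Q : int,
  2 ^+ n * a ^+ 3 * L n = 2 * (n%:R * a ^+ n.+2 + 'C(n, 3)%:R * a ^+ n * D) + Q * D ^+ 2.
Proof.
suff IH k : (exists Q : int, 2 ^+ k * a ^+ 3 * L k
    = 2 * (k%:R * a ^+ k.+2 + 'C(k, 3)%:R * a ^+ k * D) + Q * D ^+ 2)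
  /\ (exists Q : int, 2 ^+ k.+1 * a ^+ 3 * L k.+1
    = 2 * (k.+1%:R * a ^+ k.+3 + 'C(k.+1, 3)%:R * a ^+ k.+1 * D) + Q * D ^+ 2).
  by case: (IH n).
elim: k => [|k [[Q1 e1] [Q2 e2]]].
  by split; exists 0; rewrite ?lucas0 ?lucas1 bin_small //=; ring.
split; first by exists Q2.
exists (2 * a * Q2 + 4 * Q1 + 2 * 'C(k, 3)%:R * a ^+ k).
have -> : 2 ^+ k.+2 * a ^+ 3 * L k.+2
    = 2 * a * (2 ^+ k.+1 * a ^+ 3 * L k.+1) + 4 * (2 ^+ k * a ^+ 3 * L k).
  by rewrite lucasSS !exprS; ring.
by rewrite e1 e2 bin3_rec !exprS !mulrS; ring.
Qed.

Lemma three_ndvd_disc : ~~ (3 %| D)%Z.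
Proof.
have r_ge0 := modz_ge0 a (isT : 3 != 0 :> int).
have r_lt3 := ltz_pmod a (isT : 0 < 3 :> int).
have -> : D = ((a %% 3)%Z ^+ 2 + 4)
              + (3 * (a %/ 3)%Z ^+ 2 + 2 * (a %/ 3)%Z * (a %% 3)%Z) * 3.
  by rewrite {1}(divz_eq a 3); ring.
rewrite rpredDr ?dvdz_mull //.
by move: (a %% 3)%Z r_ge0 r_lt3 => [[|[|[|?]]]|?].
Qed.

Variable p : nat.
Hypotheses (pp : prime p) (p_ge3 : (3 <= p)%N) (p_D : (p%:Z %| D)%Z).

Let p_gt3 : (3 < p)%N.
Proof.
rewrite ltn_neqAle p_ge3 andbT; apply: contraNneq three_ndvd_disc => p3.
by move: p_D; rewrite -p3.
Qed.

Let p_ndvd_nat n : (0 < n < p)%N -> ~~ (p%:Z %| n%:R)%Z.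
Proof. by case/andP=> n_gt0 n_lt; rewrite natz unfold_in /= gtnNdvd. Qed.

Let p_ndvd2 : ~~ (p%:Z %| 2)%Z.
Proof. by move: (@p_ndvd_nat 2); rewrite natz; apply; rewrite /= (ltn_trans _ p_gt3). Qed.

Let p_ndvd_a : ~~ (p%:Z %| a)%Z.
Proof.
apply/negP => p_a; have : (p%:Z %| D - a * a)%Z by rewrite rpredB // dvdz_mull.
by rewrite (_ : D - a * a = 2 * 2); [rewrite prime_dvdzM // orbb (negbTE p_ndvd2) | ring].
Qed.

Let p_ndvd_2aX n : ~~ (p%:Z %| 2 * a ^+ n)%Z.
Proof.
by rewrite prime_dvdzM // (negbTE p_ndvd2); apply: contra p_ndvd_a => /(prime_dvdzX pp).
Qed.

Lemma lucas_ramified_ndvd n : (0 < n < p)%N -> ~~ (p%:Z %| L n)%Z.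
Proof.
move=> n_range; apply/negP => p_Ln; have [Q e] := lucas_mod_disc_sq n.
have : (p%:Z %| 2 * a ^+ n.+2 * n%:R)%Z.
  have -> : 2 * a ^+ n.+2 * n%:R
      = 2 ^+ n * a ^+ 3 * L n - Q * D ^+ 2 - 2 * 'C(n, 3)%:R * a ^+ n * D.
    by rewrite e; ring.
  by rewrite !rpredB ?dvdz_mull // expr2 dvdz_mull.
by rewrite prime_dvdzM // (negbTE (p_ndvd_2aX _)) (negbTE (p_ndvd_nat n_range)).
Qed.

Lemma lucas_ramified_dvd : (p%:Z %| L p)%Z.
Proof.
have [Q e] := lucas_mod_disc_sq p.
have : (p%:Z %| 2 ^+ p * a ^+ 3 * L p)%Z.
  rewrite e; apply: rpredD; last by rewrite expr2 !dvdz_mull.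
  by apply/dvdz_mull/rpredD; [rewrite natz dvdz_mulr | apply: dvdz_mull].
rewrite 2?prime_dvdzM // => /orP[/orP[p_2X | p_aX] | //].
  by have := p_ndvd2; rewrite (prime_dvdzX pp p_2X).
by have := p_ndvd_a; rewrite (prime_dvdzX pp p_aX).
Qed.

Lemma lucas_ramified_not_sq : ~~ (p%:Z ^+ 2 %| L p)%Z.
Proof.
apply/negP => p2_Lp; have [Q e] := lucas_mod_disc_sq p.
have p_C : (p %| 'C(p, 3))%N by rewrite prime_dvd_bin // (ltn_trans _ p_gt3).
have : (p%:Z ^+ 2 %| (2 * a ^+ p.+2) * p%:Z)%Z.
  have -> : 2 * a ^+ p.+2 * p%:Z
      = 2 ^+ p * a ^+ 3 * L p - Q * D ^+ 2 - 2 * a ^+ p * ('C(p, 3)%:R * D).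
    by rewrite e natz; ring.
  apply: rpredB; first apply: rpredB.
  - exact: dvdz_mull.
  - exact/dvdz_mull/dvdz_exp2r.
  by rewrite expr2; apply/dvdz_mull/dvdz_mul; rewrite // natz.
rewrite expr2 dvdz_mul2r ?eqz_nat -?lt0n ?prime_gt0 //.
by rewrite (negbTE (p_ndvd_2aX _)).
Qed.

Lemma lucas_ramified_rank r : rank_of_appearance L p r -> r = p.
Proof.
move=> [r_gt0 [p_Lr r_min]]; apply/eqP; rewrite eqn_leq leqNgt [(p <= r)%N]leqNgt.
apply/andP; split.
  by apply/negP => p_lt_r; apply: (r_min p) lucas_ramified_dvd; rewrite prime_gt0.
by apply: contraL p_Lr => r_lt_p; apply: lucas_ramified_ndvd; rewrite r_gt0.
Qed.

End Ramified.

Lemma fib_rank_gt2 (p r : nat) : prime p -> rank_of_appearance fib p r -> (2 < r)%N.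
Proof.
move=> pp [r_gt0 [p_Fr _]]; case: r r_gt0 p_Fr => [|[|[|r]]] //= _;
  by rewrite unfold_in /= Euclid_dvd1.
Qed.

Theorem theorem5 :
  (forall (a : int) (p al : nat),
     a != 0 -> prime p -> (3 <= p)%N ->
     rank_of_appearance (lucas a 1) p al -> (2 < al)%N ->
     let D : int := a ^+ 2 + 4 in
     let u := qmul D (lambda2 a) (qinv D (lambda1 a)) in
     ((p ^ 2)%N%:Z %| D)%Z \/
       (forall l : nat, order_mod_pi p D u l ->
          ~ pi_pow_divides p D 2 (qsub1 (qpow D u l))) ->
     closures_union_is_Qp (lucas a 1) p al (al - 2)%N)
  /\
  (forall (p al : nat),
     prime p -> (3 <= p)%N ->
     rank_of_appearance fib p al ->
     ~ ((p ^ 2)%N%:Z %| fib al)%Z ->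
     closures_union_is_Qp fib p al (al - 2)%N).
Proof.
split=> [a p al _ pp p_ge3 rank al_gt2 D u hyp | p al pp p_ge3 rank p2_F].
  apply: lucas_closures_union => //.
  have [p_D | p_D] := boolP (p%:Z %| D)%Z.
    by rewrite (lucas_ramified_rank pp p_ge3 p_D rank) lucas_ramified_not_sq.
  case: hyp => [p2_D | not_pi2].
    by move: p_D; rewrite (dvdz_trans _ p2_D) // natz_exp expr2 dvdz_mulr.
  apply/negP => p2_L; apply: (not_pi2 al (order_mod_pi_lambda_ratio pp p_D rank)).
  exact/(pi_pow_divides_lambda_ratio _ _ pp p_D).
apply: lucas_closures_union => //; last by rewrite -natz_exp; apply/negP.
exact: fib_rank_gt2 rank.
Qed.
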